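(* Let $(A,\phi)$ be a step algebra over a field $\mathbb F$ and let $h:[2]\to\mathbb N$ be the map sending $1$ and $2$ to $1$. Then $a*b:=\phi_{h,(1,1)}(a,b)$ is a level algebra structure on $A$: it is bilinear, commutative, and satisfies $(a*b)*(c*d)=(a*c)*(b*d)$ for all $a,b,c,d\in A$.
   Context: $[n]=\{1,\dots,n\}$. For $n\ge1$, $\mathscr L'(n)$ is the set of $h:[n]\to\mathbb N$ with $\sum_i2^{-h(i)}=1$, with $\sigma\cdot h=h\circ\sigma^{-1}$; unit $1\in\mathscr L'(1)$, $1\mapsto0$; full composition: for $h\in\mathscr L'(n)$, $g_j\in\mathscr L'(m_j)$, $\mu(h\otimes g_1\otimes\dots\otimes g_n)$ sends $m_1+\dots+m_{j-1}+t$ ($1\le t\le m_j$) to $h(j)+g_j(t)$. Compositions ${\underline r}\in\mathrm{Comp}_p(n)$: nonnegative tuples with sum $n$, identified with partitions of $[n]$ into consecutive intervals ${\underline r}_i$ of lengths $r_i$. For an ordered partition $R$ of $[n]$, $\mathscr C_R$ = maps in $\mathscr L'(n)$ constant on each part. For $\rho\in\Sigma_p$: ${\underline r}^\rho=(r_{\rho^{-1}(i)})_i$, $\rho^*$ the associated block permutation with blocks of sizes $r_i$. ${\underline r}\circ_1(l,m)=(l,m,r_2,\dots,r_p)$. $\gamma_k(Q)=(\bigsqcup_{t=0}^{k-1}(Q_j+tm))_j$ for a partition $Q$ of $[m]$; $R\otimes Q=(R_1,\dots,R_p,Q_1+n,\dots,Q_s+n)$; ${\underline r}\diamond({\underline q}_i)_i=\gamma_{r_1}({\underline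 q}_1)\otimes\dots\otimes\gamma_{r_p}({\underline q}_p)$. A step algebra $(A,\phi)$: operations $\phi_{h,{\underline r}}:A^{\times p}\to A$ for ${\underline r}\in\mathrm{Comp}_p(n)$, $h\in\mathscr C_{\underline r}$ (and $\phi_{h,R}:=\phi_{\tau\cdot h,{\underline r}}$ for a partition $R$ and $\tau\in\Sigma_n$ with $\tau(R_i)={\underline r}_i$), satisfying (S1) $\phi_{\rho^*\cdot h,{\underline r}^\rho}(a_{\rho^{-1}(1)},\dots,a_{\rho^{-1}(p)})=\phi_{h,{\underline r}}(a_1,\dots,a_p)$; (S2) $\phi_{h,(0,{\underline r})}(a_0,a_1,\dots)=\phi_{h,{\underline r}}(a_1,\dots)$; (S3) $\phi_{h,{\underline r}}(\lambda a_1,\dots)=\lambda^{r_1}\phi_{h,{\underline r}}(a_1,\dots)$; (S4) $\binom{r_1}{l}\phi_{h,{\underline r}}(a_1,\dots,a_p)=\phi_{h,{\underline r}\circ_1(l,m)}(a_1,a_1,a_2,\dots,a_p)$ for $l+m=r_1$; (S5) $\phi_{h,{\underline r}}(a+b,a_2,\dots)=\sum_{l+m=r_1}\phi_{h,{\underline r}\circ_1(l,m)}(a,b,a_2,\dots)$; (S6) $\phi_{1,(1)}(a)=a$; (S7) for $g_i\in\mathscr C_{{\underline q}_i}$, ${\underline q}_i\in\mathrm{Comp}_{k_i}(m_i)$: $\phi_{h,{\underline r}}((\phi_{g_i,{\underline q}_i}(a_{ij})_j)_i)=\big(\prod_i\frac{1}{r_i!}\prod_j\frac{(r_iq_{ij})!}{(q_{ij}!)^{r_i}}\big)\phi_{\mu(h\otimes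 g_1^{\otimes r_1}\otimes\dots\otimes g_p^{\otimes r_p}),{\underline r}\diamond({\underline q}_i)_i}((a_{ij})_{i,j})$. *)

From HB Require Import structures.
From mathcomp Require Import all_boot all_order all_algebra all_fingroup.
Set Implicit Arguments. Unset Strict Implicit. Unset Printing Implicit Defensive.
Import GRing.Theory.
Local Open Scope ring_scope.

(* Conventions: everything is 0-indexed. A map h : [n] -> N is encoded as
   the list [h(1); ...; h(n)] (a seq nat of size n).  A composition is a
   seq nat; an (ordered) partition of [n] = {0,...,n-1} is a seq of parts,
   each part a seq nat. *)

Local Open Scope nat_scope.
Definition inL (h : seq nat) : bool :=
  (\sum_(x <- h) ((2%:R : rat) ^- x) == 1)%R.

Definition inC (h r : seq nat) : bool :=
  [&& inL h, size h == sumn r & all constant (reshape r h)].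

Definition comp_parts (r : seq nat) : seq (seq nat) :=
  [seq iota (sumn (take i r)) (nth 0 r i) | i <- iota 0 (size r)].

Definition gamma (k : nat) (Q : seq (seq nat)) (m : nat) : seq (seq nat) :=
  [seq flatten [seq [seq x + t * m | x <- Qj] | t <- iota 0 k] | Qj <- Q].

(* r <> (q_i)_i = gamma_{r_1}(q_1) (x) ... (x) gamma_{r_p}(q_p) *)
Fixpoint diamond_aux (off : nat) (rq : seq (nat * seq nat)) : seq (seq nat) :=
  match rq with
  | [::] => [::]
  | (ri, qi) :: t =>
      map (map (addn off)) (gamma ri (comp_parts qi) (sumn qi))
        ++ diamond_aux (off + ri * sumn qi) t
  end.
Definition diamond (r : seq nat) (qs : seq (seq nat)) := diamond_aux 0 (zip r qs).

Definition mu (h : seq nat) (gs : seq (seq nat)) : seq nat :=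
  flatten [seq map (addn hg.1) hg.2 | hg <- zip h gs].

Definition permute (T : Type) (x0 : T) (p : nat) (rho : 'S_p) (s : seq T) :=
  [seq nth x0 s ((rho^-1)%g k) | k <- enum 'I_p].

(* phi_{h,R} := phi_{tau.h, r} with tau^-1 listing R_1, then R_2, ... ;
   tau(R_i) = r_i, (tau . h)(k) = h(tau^-1 k). *)
Definition phiR (F : fieldType) (A : lmodType F)
  (phi : seq nat -> seq nat -> seq A -> A) (h : seq nat) (R : seq (seq nat))
  (args : seq A) : A :=
  phi (map (nth 0 h) (flatten R)) (map size R) args.

(* coefficient of (S7): prod_i 1/r_i! prod_j (r_i q_ij)!/(q_ij!)^{r_i},
   an integer under the hypotheses of (S7), computed in nat and cast *)
Definition coefS7 (r : seq nat) (qs : seq (seq nat)) : nat :=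
  (\prod_(rq <- zip r qs) \prod_(q <- rq.2) (rq.1 * q)`!) %/
  (\prod_(rq <- zip r qs) (rq.1`! * \prod_(q <- rq.2) (q`! ^ rq.1))).

Local Open Scope ring_scope.
Record step_algebra (F : fieldType) (A : lmodType F)
    (phi : seq nat -> seq nat -> seq A -> A) : Prop := StepAlgebra {
  S1 : forall (r h : seq nat) (args : seq A) (rho : 'S_(size r)),
    inC h r -> size args = size r ->
    phi (flatten (permute (@nil nat) rho (reshape r h))) (permute 0%N rho r)
        (permute 0%R rho args) = phi h r args;
  S2 : forall (r h : seq nat) (a0 : A) (args : seq A),
    inC h r -> size args = size r ->
    phi h (0%N :: r) (a0 :: args) = phi h r args;
  S3 : forall (r1 : nat) (rr h : seq nat) (lam : F) (a1 : A) (args : seq A),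
    inC h (r1 :: rr) -> size args = size rr ->
    phi h (r1 :: rr) (lam *: a1 :: args) = (lam ^+ r1 *: phi h (r1 :: rr) (a1 :: args))%R;
  S4 : forall (l m : nat) (rr h : seq nat) (a1 : A) (args : seq A),
    inC h ((l + m)%N :: rr) -> size args = size rr ->
    ('C((l + m)%N, l)%:R *: phi h ((l + m)%N :: rr) (a1 :: args))%R
      = phi h (l :: m :: rr) (a1 :: a1 :: args);
  S5 : forall (r1 : nat) (rr h : seq nat) (a b : A) (args : seq A),
    inC h (r1 :: rr) -> size args = size rr ->
    phi h (r1 :: rr) ((a + b)%R :: args)
      = (\sum_(l < r1.+1) phi h (nat_of_ord l :: (r1 - l)%N :: rr) (a :: b :: args))%R;
  S6 : forall a : A, phi [:: 0%N] [:: 1%N] [:: a] = a;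
  S7 : forall (r h : seq nat) (qs gs : seq (seq nat)) (args : seq (seq A)),
    inC h r -> size qs = size r -> size gs = size r -> size args = size r ->
    (forall i, (i < size r)%N -> inC (nth [::] gs i) (nth [::] qs i)) ->
    (forall i, (i < size r)%N -> size (nth [::] args i) = size (nth [::] qs i)) ->
    phi h r [seq phi gqa.1.1 gqa.1.2 gqa.2 | gqa <- zip (zip gs qs) args]
      = ((coefS7 r qs)%:R *:
          phiR phi (mu h (flatten [seq nseq rg.1 rg.2 | rg <- zip r gs]))
               (diamond r qs) (flatten args))%R
}.

Definition level_algebra (F : fieldType) (A : lmodType F) (mul : A -> A -> A) : Prop :=
  [/\ (forall (lam : F) (a b c : A), mul (lam *: a + b) c = lam *: mul a c + mul b c)%R,
      (forall (lam : F) (a b c : A), mul a (lam *: b + c) = lam *: mul a b + mul a c)%R,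
      (forall a b : A, mul a b = mul b a) &
      (forall a b c d : A, mul (mul a b) (mul c d) = mul (mul a c) (mul b d))].

From mathcomp Require Import all_boot all_order all_algebra all_fingroup zify.

(* Bilinearity of a * b := phi_{h,(1,1)}(a, b) comes from (S3) and (S5); each of
   the two terms of the expansion (S5) of (a + b) * c has an empty block, which
   (S1) moves to the front and (S2) deletes.  Commutativity is (S1) for the
   transposition of the two arguments.  By (S7), whose coefficient is 1 when
   all r_i = 1, (a * b) * (c * d) is the single operation
   phi_{(2,2,2,2),(1,1,1,1)}(a, b, c, d), and by (S1) this operation is
   symmetric in its two middle arguments. *)

Set Implicit Arguments.
Unset Strict Implicit.
Unset Printing Implicit Defensive.

Import GRing.Theory.

Lemma nth_permute (T : Type) (x0 : T) (p : nat) (rho : 'S_p) (s : seq T) (k : 'I_p) :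
  nth x0 (permute x0 rho s) k = nth x0 s ((rho^-1)%g k).
Proof. by rewrite /permute (nth_map k) ?size_enum_ord // nth_ord_enum. Qed.

Lemma permute_tperm_succ (T : Type) (x0 : T) (p : nat) (i j : 'I_p) (s : seq T) :
  size s = p -> j = i.+1 :> nat ->
  permute x0 (tperm i j) s = take i s ++ nth x0 s j :: nth x0 s i :: drop j.+1 s.
Proof.
move=> sz_s j_succ; have lt_jp := ltn_ord j.
have sz_take : size (take i s) = i by rewrite size_take sz_s ltn_ord.
apply: (@eq_from_nth _ x0) => [|k].
  by rewrite size_map size_enum_ord size_cat sz_take /= size_drop sz_s; lia.
rewrite /permute size_map size_enum_ord => lt_kp.
rewrite -[k]/(val (Ordinal lt_kp)) nth_permute tpermV nth_cat sz_take.
case: tpermP => [-> | -> | /(introN eqP) ki /(introN eqP) kj] /=.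
- by rewrite ltnn subnn.
- by rewrite j_succ ltnNge leqnSn subSnn.
- have [lt_ki | lt_jk] : k < i \/ j < k by move: ki kj; rewrite -!val_eqE /=; lia.
    by rewrite lt_ki nth_take.
  have -> : k - i = (k - j.+1).+2 by lia.
  by rewrite ifN /= ?nth_drop; [congr nth | ]; lia.
Qed.

Lemma coefS7_ones (qs : seq (seq nat)) : coefS7 (nseq (size qs) 1) qs = 1.
Proof.
have zip_ones : zip (nseq (size qs) 1) qs = [seq (1, q) | q <- qs].
  by elim: qs => //= q qs ->.
rewrite /coefS7 zip_ones !big_map /=.
have denom q : 1`! * \prod_(x <- q) x`! ^ 1 = \prod_(x <- q) (1 * x)`!.
  by rewrite mul1n; apply: eq_bigr => x _; rewrite mul1n expn1.
rewrite (eq_bigr _ (fun q _ => denom q)) divnn prodn_gt0 // => q.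
by rewrite prodn_gt0 // => x; apply: fact_gt0.
Qed.

Lemma inC_halves : inC [:: 1; 1] [:: 1; 1].
Proof. by rewrite /inC /inL !big_cons big_nil. Qed.

Lemma inC_halves_gap : inC [:: 1; 1] [:: 1; 0; 1].
Proof. by rewrite /inC /inL !big_cons big_nil. Qed.

Lemma inC_quarters : inC [:: 2; 2; 2; 2] [:: 1; 1; 1; 1].
Proof. by rewrite /inC /inL !big_cons big_nil. Qed.

Section StepProduct.

Variables (F : fieldType) (A : lmodType F) (phi : seq nat -> seq nat -> seq A -> A).
Hypothesis phiS : step_algebra phi.

Definition step_mul (a b : A) : A := phi [:: 1; 1] [:: 1; 1] [:: a; b].

Lemma step_mulC : commutative step_mul.
Proof.
move=> a b; rewrite /step_mul -(S1 phiS (r := [:: 1; 1]) (tperm ord0 (inord 1)) inC_halves) //.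
by rewrite !(@permute_tperm_succ _ _ _ ord0 (inord 1)) ?inordK.
Qed.

Lemma step_mulZl (lam : F) (a b : A) : step_mul (lam *: a) b = (lam *: step_mul a b)%R.
Proof. by rewrite /step_mul (S3 phiS _ _ inC_halves) // expr1. Qed.

Lemma step_mulDl (a b c : A) : step_mul (a + b)%R c = (step_mul a c + step_mul b c)%R.
Proof.
rewrite /step_mul (S5 phiS _ _ inC_halves) // !big_ord_recr big_ord0 /= add0r.
rewrite (S2 phiS _ inC_halves) //.
rewrite -(S1 phiS (r := [:: 1; 0; 1]) (tperm ord0 (inord 1)) inC_halves_gap) //.
rewrite !(@permute_tperm_succ _ _ _ ord0 (inord 1)) ?inordK //=.
by rewrite (S2 phiS _ inC_halves) // addrC.
Qed.

Lemma step_mul_linearl (lam : F) (a b c : A) :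
  step_mul (lam *: a + b)%R c = (lam *: step_mul a c + step_mul b c)%R.
Proof. by rewrite step_mulDl step_mulZl. Qed.

Lemma step_mul_linearr (lam : F) (a b c : A) :
  step_mul a (lam *: b + c)%R = (lam *: step_mul a b + step_mul a c)%R.
Proof. by rewrite !(step_mulC a) step_mul_linearl. Qed.

Lemma step_mul_step_mul (a b c d : A) :
  step_mul (step_mul a b) (step_mul c d) = phi [:: 2; 2; 2; 2] [:: 1; 1; 1; 1] [:: a; b; c; d].
Proof.
pose qs := [:: [:: 1; 1]; [:: 1; 1]].
have halves_at i : i < 2 -> inC (nth [::] qs i) (nth [::] qs i).
  by case: i => [|[|]] // _; apply: inC_halves.
pose args := [:: [:: a; b]; [:: c; d]].
have sizes_at i : i < 2 -> size (nth [::] args i) = size (nth [::] qs i).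
  by case: i => [|[|]].
have := S7 phiS (qs := qs) (gs := qs) (args := args) inC_halves erefl erefl erefl halves_at sizes_at.
by rewrite /step_mul /= (coefS7_ones qs) scale1r.
Qed.

Lemma step_mul_medial (a b c d : A) :
  step_mul (step_mul a b) (step_mul c d) = step_mul (step_mul a c) (step_mul b d).
Proof.
rewrite !step_mul_step_mul.
rewrite -(S1 phiS (r := [:: 1; 1; 1; 1]) (tperm (inord 1) (inord 2)) inC_quarters) //.
by rewrite !(@permute_tperm_succ _ _ _ (inord 1) (inord 2)) ?inordK.
Qed.

End StepProduct.

Theorem proposition6p1 (F : fieldType) (A : lmodType F)
  (phi : seq nat -> seq nat -> seq A -> A) :
  step_algebra phi ->
  level_algebra (fun a b : A => phi [:: 1; 1] [:: 1; 1] [:: a; b]).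
Proof.
move=> phiS; split.
- exact: step_mul_linearl phiS.
- exact: step_mul_linearr phiS.
- exact: step_mulC phiS.
- exact: step_mul_medial phiS.
Qed.
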